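(* Let $\mathcal{C}_1,\dots,\mathcal{C}_K$ be a partition of $\mathcal{V}=\{v_1,\dots,v_N\}$ into nonempty sets and define $\mathbf{H}\in\mathbb{R}^{N\times K}$ by $H_{ij}=1/\sqrt{|\mathcal{C}_j|}$ if $v_i\in\mathcal{C}_j$ and $H_{ij}=0$ otherwise. Let $\mathbf{R}\in\{0,1\}^{N\times N}$ be the symmetric adjacency matrix of a representation graph on $\mathcal{V}$. If $\mathbf{R}\left(\mathbf{I}-\frac1N\mathbf{1}\mathbf{1}^\intercal\right)\mathbf{H}=\mathbf{0}$, then $$\frac{|\mathcal{C}_k\cap\mathcal{N}_{\mathcal{R}}(i)|}{|\mathcal{C}_k|}=\frac{|\mathcal{N}_{\mathcal{R}}(i)|}{N}\quad\text{for all }k\in[K],\ i\in[N].$$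
   Context: $\mathbf{I}$ is the $N\times N$ identity and $\mathbf{1}$ the all-ones vector in $\mathbb{R}^N$. $\mathcal{N}_{\mathcal{R}}(i)=\{v_j:R_{ij}=1\}$ is the set of neighbours of $v_i$ in the representation graph (self-loops allowed). *)

From mathcomp Require Import all_boot all_order all_algebra.
Set Implicit Arguments. Unset Strict Implicit. Unset Printing Implicit Defensive.
Import Order.TTheory GRing.Theory Num.Theory.
Local Open Scope ring_scope.

(* A partition C_1..C_K of V = 'I_N is encoded by the cluster-assignment map
   c : 'I_N -> 'I_K (v_i \in C_(c i)); cluster k is [set i | c i == k]. *)
Definition cluster (N K : nat) (c : 'I_N -> 'I_K) (k : 'I_K) : {set 'I_N} :=
  [set i | c i == k].

Definition Hmx (R : rcfType) (N K : nat) (c : 'I_N -> 'I_K) : 'M[R]_(N, K) :=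
  \matrix_(i < N, j < K)
    (if i \in cluster c j then (Num.sqrt (#|cluster c j|%:R))^-1 else 0).

Definition centering_mx (R : fieldType) (N : nat) : 'M[R]_N :=
  1%:M - (N%:R)^-1 *: const_mx 1.

Definition nbhd (R : pzRingType) (N : nat) (A : 'M[R]_N) (i : 'I_N) : {set 'I_N} :=
  [set j | A i j == 1].

(* Right multiplication by the centering matrix subtracts from row i of R its
   mean deg(i)/N, and column k of H sums a row over the cluster C_k, scaled by
   1/sqrt|C_k|.  For a 0/1 row these sums are neighbour counts, so entry (i, k)
   of R (I - 11^T/N) H equals (|C_k ∩ N(i)| - |C_k| deg(i)/N) / sqrt|C_k|, and
   it vanishes exactly when the two proportions agree. *)
From mathcomp Require Import all_boot all_order all_algebra.
Import Order.TTheory GRing.Theory Num.Theory.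
Set Implicit Arguments. Unset Strict Implicit. Unset Printing Implicit Defensive.
Local Open Scope ring_scope.

Lemma sum_row_nbhd (F : nzRingType) (N : nat) (A : 'M[F]_N) (i : 'I_N)
    (S : {set 'I_N}) :
  (forall j, A i j = 0 \/ A i j = 1) ->
  \sum_(j in S) A i j = #|S :&: nbhd A i|%:R.
Proof.
move=> A01; rewrite -sum1_card natr_sum big_mkcond [RHS]big_mkcond /=.
apply: eq_bigr => j _; rewrite in_setI /nbhd inE.
by case: (j \in S); case: (A01 j) => ->; rewrite ?eqxx // eq_sym oner_eq0.
Qed.

Lemma mul_centering_mxE (F : fieldType) (m N : nat) (A : 'M[F]_(m, N)) i j :
  (A *m centering_mx F N) i j = A i j - N%:R^-1 * \sum_l A i l.
Proof.
rewrite !mxE; under eq_bigr do rewrite !mxE mulr1 mulrBr.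
rewrite sumrB -mulr_suml mulrC (bigD1 j) //= eqxx mulr1 big1 ?addr0 //.
by move=> l /negbTE ->; rewrite mulr0.
Qed.

Lemma mul_HmxE (F : rcfType) (m N K : nat) (c : 'I_N -> 'I_K)
    (B : 'M[F]_(m, N)) i k :
  (B *m Hmx F c) i k
    = (Num.sqrt #|cluster c k|%:R)^-1 * \sum_(j in cluster c k) B i j.
Proof.
rewrite mxE mulr_sumr [RHS]big_mkcond /=; apply: eq_bigr => j _.
by rewrite mxE; case: (j \in cluster c k); rewrite ?mulr0 ?mul0r // mulrC.
Qed.

Lemma sum_centered_row (F : fieldType) (m N : nat) (A : 'M[F]_(m, N)) i
    (S : {set 'I_N}) :
  \sum_(j in S) (A *m centering_mx F N) i j
    = \sum_(j in S) A i j - #|S|%:R * (N%:R^-1 * \sum_l A i l).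
Proof.
under eq_bigr do rewrite mul_centering_mxE.
by rewrite sumrB sumr_const mulr_natl.
Qed.

Theorem lemma1 (F : rcfType) (N K : nat) (c : 'I_N -> 'I_K) (R : 'M[F]_N) :
  (forall k : 'I_K, cluster c k != set0) ->
  (forall i j, R i j = 0 \/ R i j = 1) ->
  R^T = R ->
  R *m (@centering_mx F N) *m Hmx F c = 0 ->
  forall (k : 'I_K) (i : 'I_N),
    #|cluster c k :&: nbhd R i|%:R / #|cluster c k|%:R
    = #|nbhd R i|%:R / N%:R :> F.
Proof.
move=> clusterN0 R01 _ RCH0 k i.
set C := cluster c k.
have C_gt0 : (0 < #|C|)%N by rewrite card_gt0 clusterN0.
have sqrtC_neq0 : Num.sqrt (#|C|%:R : F) != 0 by rewrite sqrtr_eq0 -ltNge ltr0n.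
have /eqP := congr1 (fun M : 'M[F]_(N, K) => M i k) RCH0.
rewrite mul_HmxE sum_centered_row mxE mulf_eq0 invr_eq0 (negbTE sqrtC_neq0) /=.
rewrite subr_eq0 (sum_row_nbhd C (R01 i)).
have -> : \sum_l R i l = #|nbhd R i|%:R.
  by rewrite -big_set /= (sum_row_nbhd setT (R01 i)) setTI.
by move=> /eqP ->; rewrite [_ * (_ * _)]mulrC mulfK ?pnatr_eq0 -?lt0n // mulrC.
Qed.
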